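(* Let $\Theta_1,\Theta_2,\ldots$ be independent random variables with $\mathbb P(\Theta_j\le\theta)=\theta/(\theta+j-1)$ for $\theta\ge0$ (convention $0/0=1$), and for fixed $n\ge1$ let $C_{n,\theta}$ be the composition of $n$ whose binary representation is $(1(\Theta_j\le\theta))_{1\le j\le n}$. Then $(C_{n,\theta},\theta\ge0)$ is a (time-inhomogeneous) Markov process whose transition rates are as follows: if at time $\theta$ the state is the composition encoded by a binary sequence (starting with $1$), then each $0$ in that sequence, located at place $j$, switches to $1$ at rate $1/(\theta+j-1)$, independently, and all other transition rates are zero.
   Context: A composition of $n$ is a sequence of positive integers $(n_1,\ldots,n_k)$ with sum $n$. Its binary representation is the length-$n$ 0/1 sequence formed by concatenating the words $10^{n_1-1},10^{n_2-1},\ldots,10^{n_k-1}$ (so the $1$'s sit at places $1,n_1+1,\ldots,n_1+\cdots+n_{k-1}+1$); every 0/1 sequence of length $n$ beginning with $1$ encodes a unique composition of $n$. *)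

From HB Require Import structures.
From mathcomp Require Import all_boot all_order all_algebra.
From mathcomp Require Import all_classical all_reals all_analysis.
Set Implicit Arguments. Unset Strict Implicit. Unset Printing Implicit Defensive.
Import Order.TTheory GRing.Theory Num.Theory.
Import numFieldNormedType.Exports.
Local Open Scope classical_set_scope.
Local Open Scope ring_scope.

Definition is_composition (n : nat) (c : seq nat) : bool :=
  all (fun k => 0 < k)%N c && (sumn c == n).

Definition encode (c : seq nat) : seq bool :=
  flatten [seq true :: nseq (k - 1) false | k <- c].

(* Decoding a 0/1 sequence starting with 1 into the composition it encodes:
   aux returns (number of leading zeros, composition encoded by the rest). *)
Fixpoint decode_aux (s : seq bool) : nat * seq nat :=
  match s with
  | [::] => (0%N, [::])
  | b :: s' => let: (z, p) := decode_aux s' in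
               if b then (0%N, z.+1 :: p) else (z.+1, p)
  end.
Definition decode (s : seq bool) : seq nat := (decode_aux s).2.

(* cdf of Theta_{i+1} (0-based index i): theta / (theta + i), with 0/0 = 1. *)
Definition cdfTheta {R : realType} (i : nat) (theta : R) : R :=
  if theta + i%:R == 0 then 1 else theta / (theta + i%:R).

Definition Pr {d} {T : measurableType d} {R : realType}
  (P : probability T R) (A : set T) : R := fine (P A).

Definition mutually_independent {d} {T : measurableType d} {R : realType}
  (P : probability T R) (X : nat -> T -> R) : Prop :=
  forall (J : seq nat) (B : nat -> set R), uniq J ->
    (forall j, j \in J -> measurable (B j)) ->
    Pr P (\bigcap_(j in [set j | j \in J]) (X j @^-1` B j))
    = \prod_(j <- J) Pr P (X j @^-1` B j).

(* The composition process: C_{n,theta} encoded by (1(Theta_j <= theta))_{1<=j<=n}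
   (0-based: bit i is 1(Theta i <= theta), Theta i standing for Theta_{i+1}). *)
Definition Cproc {T : Type} {R : realType} (Theta : nat -> T -> R) (n : nat)
  (theta : R) (w : T) : seq nat :=
  decode [seq (Theta i w <= theta) | i <- iota 0 n].

(* Markov property (time-inhomogeneous) of a process X indexed by times >= 0
   with values in a discrete (eq)type S: conditionally on the present, the
   future is independent of any finite set of past observations. *)
Definition is_markov {d} {T : measurableType d} {R : realType} {S : eqType}
  (P : probability T R) (X : R -> T -> S) : Prop :=
  forall (past : seq (R * S)) (s t : R) (x y : S),
    all (fun p => (0 <= p.1) && (p.1 <= s)) past -> 0 <= s -> s <= t ->
    let A := [set w | all (fun p => X p.1 w == p.2) past] in
    let Ex := [set w | X s w = x] in
    let Ey := [set w | X t w = y] in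
    0 < Pr P (A `&` Ex) ->
    Pr P (A `&` Ex `&` Ey) / Pr P (A `&` Ex) = Pr P (Ex `&` Ey) / Pr P Ex.

(* The claimed transition rate from composition c to composition c' at time
   theta: nonzero only if the binary sequence of c' is obtained from that of c
   by switching a single 0, at (1-based) place j = i+1, to 1; the rate is then
   1/(theta + j - 1) = 1/(theta + i). *)
Definition rate {R : realType} (n : nat) (theta : R) (c c' : seq nat) : R :=
  \sum_(i < n)
    (if (nth true (encode c) i == false) &&
        (encode c' == set_nth false (encode c) i true)
     then (theta + i%:R)^-1 else 0).

Definition has_rates {d} {T : measurableType d} {R : realType}
  (P : probability T R) (n : nat) (X : R -> T -> seq nat)
  (q : R -> seq nat -> seq nat -> R) : Prop :=
  forall (theta : R) (c c' : seq nat),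
    0 <= theta -> is_composition n c -> is_composition n c' -> c != c' ->
    0 < Pr P [set w | X theta w = c] ->
    (fun h => Pr P ([set w | X theta w = c] `&` [set w | X (theta + h) w = c'])
                / Pr P [set w | X theta w = c] / h)
      @ 0^'+ --> q theta c c'.

(* On the almost sure event Theta_1 <= 0 the binary word of C_{n,theta} starts
   with 1, so the composition and the bits 1(Theta_j <= theta) determine each other.
   By independence, the probability of any finite family of observations of the
   process is therefore a product over j of the probabilities that the single
   variable Theta_j realises a pattern of threshold bits.  For one variable the
   bit process theta |-> 1(Theta_j <= theta) is monotone: once its value at time s
   is known, either its past (bit 0) or its future (bit 1) is deterministic, which
   gives the Markov identity factor by factor.  For the rates, a bit equal to 0 at
   time theta switches during (theta, theta + h] with conditional probability
   h / (theta + j - 1 + h) and a 1 never switches back, so after dividing by h only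
   transitions flipping exactly one 0 survive as h -> 0+. *)

From Pilot Require Import Defs.
From HB Require Import structures.
From mathcomp Require Import all_boot all_order all_algebra.
From mathcomp Require Import all_classical all_reals all_analysis.
From mathcomp Require Import ring.
Import Order.TTheory GRing.Theory Num.Theory.
Import numFieldNormedType.Exports.
Local Open Scope classical_set_scope.
Local Open Scope ring_scope.

(* Unqualified, [encode] and [decode] would refer to the GenTree coding of choice.v. *)
Local Notation encode := Defs.encode.
Local Notation decode := Defs.decode.

Lemma decode_aux_nseq m s :
  decode_aux (nseq m false ++ s) = (m + (decode_aux s).1, (decode_aux s).2)%N.
Proof. by elim: m => [|m IHm] /=; [case: (decode_aux s) | rewrite IHm]. Qed.

Lemma decode_encode c : all (fun k => 0 < k)%N c -> decode (encode c) = c.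
Proof.
suff: all (fun k => 0 < k)%N c -> decode_aux (encode c) = (0%N, c).
  by rewrite /decode => H /H ->.
elim: c => [|k c IHc] //= /andP[k_gt0 /IHc IH].
by rewrite /encode /= -/(encode c) decode_aux_nseq IH addn0 subn1 prednK.
Qed.

Lemma encode_decode_aux s :
  nseq (decode_aux s).1 false ++ encode (decode_aux s).2 = s.
Proof.
elim: s => [|[] s] //=; case: (decode_aux s) => z p /= IHs; last by rewrite IHs.
by rewrite /encode /= -/(encode p) subn1 IHs.
Qed.

Lemma encode_decode s : encode (decode (true :: s)) = true :: s.
Proof.
have := encode_decode_aux (true :: s); rewrite /decode /=.
by case: (decode_aux s).
Qed.

Lemma decode_true_eq s x :
  (decode (true :: s) == x) = (true :: s == encode x) && (decode (encode x) == x).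
Proof.
apply/eqP/andP => [<- | [/eqP -> /eqP //]].
by rewrite encode_decode !eqxx.
Qed.

Lemma size_encode {n c} : is_composition n c -> size (encode c) = n.
Proof.
case/andP => + /eqP <-; elim: c => [|k c IHc] //= /andP[k_gt0 /IHc IH].
by rewrite /encode /= -/(encode c) size_cat size_nseq IH subn1 -addSn prednK.
Qed.

Lemma composition_encodeK {n c} : is_composition n c -> decode (encode c) = c.
Proof. by case/andP => pos_c _; exact: decode_encode. Qed.

Lemma map_iota_eq (f : nat -> bool) n s :
  ([seq f i | i <- iota 0 n] == s) =
  (size s == n) && all (fun i => f i == nth false s i) (iota 0 n).
Proof.
apply/eqP/andP => [<- | [/eqP size_s /allP f_s]].
  rewrite size_map size_iota; split=> //; apply/allP => i.
  by rewrite mem_iota => /andP[_ lt_in]; rewrite (nth_map 0%N) ?size_iota ?nth_iota.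
apply: (@eq_from_nth _ false); first by rewrite size_map size_iota.
move=> i; rewrite size_map size_iota => lt_in.
rewrite (nth_map 0%N) ?size_iota // nth_iota //; apply/eqP/f_s.
by rewrite mem_iota.
Qed.

Section Probability.
Context {d : measure_display} {T : measurableType d} {R : realType}.
Variable P : probability T R.

Lemma Pr0 : Pr P set0 = 0.
Proof. by rewrite /Pr measure0. Qed.

Lemma Pr_ge0 A : 0 <= Pr P A.
Proof. exact: fine_ge0. Qed.

Lemma Pr_le A B : measurable A -> measurable B -> A `<=` B -> Pr P A <= Pr P B.
Proof.
move=> mA mB AB; rewrite fine_le ?fin_num_measure //.
by apply: le_measure; rewrite ?inE.
Qed.

Lemma PrU A B : measurable A -> measurable B -> A `&` B = set0 ->
  Pr P (A `|` B) = Pr P A + Pr P B.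
Proof.
by move=> mA mB AB0; rewrite /Pr measureU // fineD ?fin_num_measure.
Qed.

Lemma PrC A : measurable A -> Pr P (~` A) = 1 - Pr P A.
Proof. by move=> mA; rewrite /Pr probability_setC // fineB ?fin_num_measure. Qed.

Lemma PrI_almost_sure A G : measurable A -> measurable G -> Pr P G = 1 ->
  Pr P (A `&` G) = Pr P A.
Proof.
move=> mA mG PG1.
have mAG : measurable (A `&` G) by exact: measurableI.
have mAnG : measurable (A `&` ~` G) by apply: measurableI => //; exact: measurableC.
have PAnG0 : Pr P (A `&` ~` G) = 0.
  apply/eqP; rewrite eq_le Pr_ge0 andbT -(subrr 1) -{2}PG1 -PrC //.
  by apply: Pr_le; [|exact: measurableC|exact: subIsetr].
rewrite -[in RHS](setIT A) -(setUv G) setIUr PrU //; last first.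
  by rewrite setIACA setICr setI0.
by rewrite PAnG0 addr0.
Qed.

End Probability.

Definition threshold_set {R : realType} (L : seq (R * bool)) : set R :=
  [set r | all (fun p => (r <= p.1) == p.2) L].

Section ThresholdSets.
Context {R : realType}.
Implicit Types (L : seq (R * bool)) (s t : R) (b : bool).

Lemma threshold_set_cat L1 L2 :
  threshold_set (L1 ++ L2) = threshold_set L1 `&` threshold_set L2.
Proof.
apply/seteqP; split => r; rewrite /threshold_set /= all_cat; first by move/andP.
by move=> [-> ->].
Qed.

Lemma threshold_set1 t b : threshold_set [:: (t, b)] = [set r | (r <= t) == b].
Proof. by apply/seteqP; split => r; rewrite /threshold_set /= andbT. Qed.

Lemma measurable_threshold_set L : measurable (threshold_set L).
Proof.
elim: L => [|[t b] L IHL].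
  by rewrite [threshold_set _](_ : _ = setT) //; apply/seteqP; split.
rewrite -cat1s threshold_set_cat threshold_set1; apply: measurableI => //.
case: b.
  rewrite [X in measurable X](_ : _ = `]-oo, t]%classic); first exact: measurable_itv.
  by apply/seteqP; split => r /=; rewrite in_itv /= eqb_id.
rewrite [X in measurable X](_ : _ = `]t, +oo[%classic); first exact: measurable_itv.
by apply/seteqP; split => r /=; rewrite in_itv /= andbT eqbF_neg -ltNge.
Qed.

(* The present screens the past from the future: r <= s forces r <= t, while
   r > s forces r > p at every earlier time p. *)
Lemma threshold_set_screened past s t b b' :
  all (fun p => p.1 <= s) past -> s <= t ->
  let X := [set r | (r <= s) == b] in let Y := [set r | (r <= t) == b'] in
  [\/ X `<=` Y, X `&` Y = set0, X `<=` threshold_set past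
     | X `&` threshold_set past = set0].
Proof.
move=> /allP past_le_s le_st /=.
case: b.
  case: b'; [apply: Or41 | apply: Or42].
    by move=> r /= /eqP r_le_s; apply/eqP/(le_trans r_le_s).
  apply/seteqP; split => // r [/eqP r_le_s /eqP].
  by rewrite (le_trans r_le_s le_st).
have past_gt r : ~~ (r <= s) -> forall p, p \in past -> (r <= p.1) = false.
  move=> r_gt_s p /past_le_s p_le_s; apply: contraNF r_gt_s => r_le_p.
  exact: le_trans r_le_p p_le_s.
case: (boolP (all (fun p => ~~ p.2) past)) => [/allP past_false | /allPn[p p_past /negPn p2]].
  apply: Or43 => r /= /eqP/negbT r_gt_s; apply/allP => p p_past.
  by rewrite past_gt // eq_sym eqbF_neg past_false.
apply: Or44; apply/seteqP; split => // r [/= /eqP/negbT r_gt_s /allP/(_ p p_past)].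
by rewrite past_gt // p2.
Qed.

End ThresholdSets.

Lemma cond_indep_degenerate {U : Type} {R : comPzRingType} (m : set U -> R)
    (A X Y : set U) :
  m set0 = 0 -> [\/ X `<=` Y, X `&` Y = set0, X `<=` A | X `&` A = set0] ->
  m (A `&` (X `&` Y)) * m X = m (A `&` X) * m (X `&` Y).
Proof.
move=> m0 [XY | XY0 | XA | XA0].
- by rewrite (setIidl XY).
- by rewrite XY0 setI0 m0 mul0r mulr0.
- by rewrite setIA (setIidr XA) mulrC.
- by rewrite setIA [A `&` X]setIC XA0 set0I m0 !mul0r.
Qed.

Lemma threshold_markov {R : realType} (m : set R -> R) past s t b b' :
  m set0 = 0 -> all (fun p => p.1 <= s) past -> s <= t ->
  m (threshold_set (past ++ [:: (s, b); (t, b')])) * m (threshold_set [:: (s, b)]) =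
  m (threshold_set (past ++ [:: (s, b)])) * m (threshold_set [:: (s, b); (t, b')]).
Proof.
move=> m0 past_le_s le_st.
rewrite -(cat1s (s, b) [:: (t, b')]) !threshold_set_cat !threshold_set1.
exact/cond_indep_degenerate/threshold_set_screened.
Qed.

Lemma cdfTheta0 {R : realType} (t : R) : cdfTheta 0 t = 1.
Proof. by rewrite /cdfTheta addr0; case: eqP => // /eqP t_neq0; rewrite divff. Qed.

Lemma cdfThetaE {R : realType} i (t : R) : (0 < i)%N -> 0 <= t ->
  cdfTheta i t = t / (t + i%:R).
Proof. by move=> i_gt0 t_ge0; rewrite /cdfTheta gt_eqF // ltr_wpDl // ltr0n. Qed.

(* P(1(X <= theta + h) = b' | 1(X <= theta) = b) when P(X <= t) = t / (t + i)
   and a = theta + i. *)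
Definition bit_ratio {R : realType} (a : R) (b b' : bool) (h : R) : R :=
  if b then b'%:R else if b' then h / (a + h) else a / (a + h).

Section RealRandomVariable.
Context {d : measure_display} {T : measurableType d} {R : realType}.
Variables (P : probability T R) (X : T -> R).
Hypothesis mX : measurable_fun setT X.

Local Notation F t := (Pr P [set w | X w <= t]).

Lemma measurable_preimage_threshold L : measurable (X @^-1` threshold_set L).
Proof. by rewrite -[_ @^-1` _]setTI; apply: mX => //; exact: measurable_threshold_set. Qed.

Lemma preimage_threshold_le t :
  X @^-1` threshold_set [:: (t, true)] = [set w | X w <= t].
Proof. by rewrite threshold_set1; apply/seteqP; split => w /=; rewrite eqb_id. Qed.

Lemma measurable_preimage_le t : measurable [set w | X w <= t].
Proof. by rewrite -preimage_threshold_le; exact: measurable_preimage_threshold. Qed.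

Lemma Pr_threshold1 t b :
  Pr P (X @^-1` threshold_set [:: (t, b)]) = if b then F t else 1 - F t.
Proof.
case: b; first by rewrite preimage_threshold_le.
rewrite threshold_set1 -PrC; last exact: measurable_preimage_le.
by congr (Pr P _); apply/seteqP; split => w /=; rewrite eqbF_neg => /negP.
Qed.

Lemma Pr_threshold2 s t b b' : s <= t ->
  Pr P (X @^-1` threshold_set [:: (s, b); (t, b')]) =
  if b then (if b' then F s else 0) else (if b' then F t - F s else 1 - F t).
Proof.
move=> le_st; have le_t w : X w <= s -> X w <= t by move/le_trans; apply.
case: b; case: b'.
- congr (Pr P _); apply/seteqP; split => w; rewrite /preimage /threshold_set /= !eqb_id andbT.
    by case/andP.
  by move=> Xs; rewrite Xs le_t.
- rewrite -(Pr0 P); congr (Pr P _); apply/seteqP; split => // w.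
  by rewrite /preimage /threshold_set /= eqb_id eqbF_neg andbT => /andP[/le_t ->].
- have -> : [set w | X w <= t] =
      [set w | X w <= s] `|` X @^-1` threshold_set [:: (s, false); (t, true)].
    apply/seteqP; split => w; rewrite /preimage /threshold_set /= eqb_id eqbF_neg andbT.
      by move=> Xt; case: (boolP (X w <= s)) => /= Xs; [left | right].
    by case=> [/le_t | /andP[]].
  rewrite PrU; [by rewrite addrC addKr | exact: measurable_preimage_le | |].
    exact: measurable_preimage_threshold.
  by apply/seteqP; split => // w [/= Xs]; rewrite /preimage /threshold_set /= Xs.
- rewrite -PrC; last exact: measurable_preimage_le.
  congr (Pr P _); apply/seteqP; split => w.
  all: rewrite /preimage /threshold_set /= !eqbF_neg andbT.
    by case/andP => _ /negP.
  by move/negP => Xt; apply/andP; split => //; apply: contra Xt; exact: le_t.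
Qed.

Lemma cdfTheta_index_gt0 i theta :
  (forall t, 0 <= t -> F t = cdfTheta i t) -> 0 <= theta ->
  Pr P (X @^-1` threshold_set [:: (theta, false)]) != 0 -> (0 < i)%N.
Proof.
move=> cdfX theta_ge0; rewrite Pr_threshold1 cdfX //.
by case: i {cdfX} => //; rewrite cdfTheta0 subrr eqxx.
Qed.

Lemma Pr_threshold_ratio i theta h b b' :
  (forall t, 0 <= t -> F t = cdfTheta i t) -> 0 <= theta -> 0 < h ->
  Pr P (X @^-1` threshold_set [:: (theta, b)]) != 0 ->
  Pr P (X @^-1` threshold_set [:: (theta, b); (theta + h, b')]) /
    Pr P (X @^-1` threshold_set [:: (theta, b)]) = bit_ratio (theta + i%:R) b b' h.
Proof.
move=> cdfX theta_ge0 h_gt0.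
have le_theta_h : theta <= theta + h by rewrite lerDl ltW.
rewrite Pr_threshold1 Pr_threshold2 // /bit_ratio; case: b => [|Fc_neq0].
  by case: b' => F_neq0; rewrite ?mul0r // divff.
have i_gt0 : (0 < i)%N.
  by apply: cdfTheta_index_gt0 cdfX theta_ge0 _; rewrite Pr_threshold1.
have thetah_ge0 := le_trans theta_ge0 le_theta_h.
rewrite !cdfX // !cdfThetaE //.
have i_neq0 : i%:R != 0 :> R by rewrite pnatr_eq0 -lt0n.
have a_gt0 : 0 < theta + i%:R by rewrite ltr_wpDl // ltr0n.
have ah_neq0 : theta + i%:R + h != 0 by rewrite addrAC gt_eqF // ltr_wpDl // ltr0n.
by case: b'; field; rewrite ah_neq0 gt_eqF //= addrAC subrr add0r.
Qed.

End RealRandomVariable.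

Lemma inv_shift_cvg {R : realType} {a : R} : a != 0 ->
  (a + h)^-1 @[h --> 0^'+] --> a^-1.
Proof.
move=> a_neq0; apply: cvg_at_right_filter; apply: cvgV => //.
by rewrite -[X in _ --> X]addr0; apply: cvgD; [exact: cvg_cst | exact: cvg_id].
Qed.

Lemma bit_ratio_cvg {R : realType} (a : R) b b' : b || (0 < a) ->
  bit_ratio a b b' h @[h --> 0^'+] --> bit_ratio a b b' 0.
Proof.
rewrite /bit_ratio; case: b => /= [_|a_gt0]; first exact: cvg_cst.
have inv_cvg := inv_shift_cvg (lt0r_neq0 a_gt0).
rewrite addr0; case: b'; apply: cvgM => //; first exact: cvg_at_right_filter cvg_id.
exact: cvg_cst.
Qed.

Section FlipRate.
Context {R : realType} {n : nat} {a : nat -> R} {b b' : seq bool}.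
Hypotheses (size_b : size b = n) (size_b' : size b' = n).
Hypothesis a_gt0 : forall i : 'I_n, ~~ nth false b i -> 0 < a i.

Let flip_rate := \sum_(i < n)
  (if ~~ nth false b i && (b' == set_nth false b i true) then (a i)^-1 else 0).

Lemma set_nth_flip_neq {i j : nat} : ~~ nth false b j -> nth false b' j -> i != j ->
  b' != set_nth false b i true.
Proof.
move=> bj b'j ij; apply: contraNneq bj => b'E.
by move: b'j; rewrite b'E nth_set_nth /= eq_sym (negbTE ij).
Qed.

Lemma flip_rate_at (j : 'I_n) : ~~ nth false b j -> nth false b' j ->
  flip_rate = if b' == set_nth false b j true then (a j)^-1 else 0.
Proof.
move=> bj b'j; rewrite /flip_rate (bigD1 j) //= bj big1 ?addr0 // => i ij.
by rewrite (negbTE (set_nth_flip_neq bj b'j ij)) andbF.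
Qed.

Lemma flip_rate_eq0 (i : 'I_n) : nth false b i -> ~~ nth false b' i -> flip_rate = 0.
Proof.
move=> bi b'i; rewrite /flip_rate big1 // => j _; case: ifP => // /andP[bj /eqP b'E].
have ij : (i : nat) != j by apply: contraTneq bi => ->.
by move: b'i; rewrite b'E nth_set_nth /= (negbTE ij) bi.
Qed.

Lemma prod_bit_ratio0 (j : 'I_n) : nth false b' j ->
  (forall i : 'I_n, nth false b i -> nth false b' i) ->
  \prod_(i < n | i != j) bit_ratio (a i) (nth false b i) (nth false b' i) 0 =
  (b' == set_nth false b j true)%:R.
Proof.
move=> b'j b_le_b'; case: eqP => [b'E | b'NE].
  rewrite big1 // => i ij; rewrite b'E nth_set_nth /= ifN // /bit_ratio.
  by case: (boolP (nth false b i)) => //= bi; rewrite addr0 divff // gt_eqF // a_gt0.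
have [k kj bk] : exists2 k : 'I_n, k != j & nth false b k != nth false b' k.
  apply/exists_inP; apply: contra_notT b'NE => /exists_inPn same.
  apply: (@eq_from_nth _ false); first by rewrite size_set_nth size_b size_b' (maxn_idPr _).
  move=> i; rewrite size_b' => lt_in; rewrite nth_set_nth /=.
  case: eqP => [-> // | /eqP ij].
  exact/esym/eqP/negPn/(same (Ordinal lt_in)).
rewrite (bigD1 k) //= /bit_ratio; move: bk.
by case: (nth false b k) (b_le_b' k) => [-> // | _]; case: (nth false b' k); rewrite ?mul0r.
Qed.

Lemma exists_flip : b != b' -> (forall i : 'I_n, nth false b i -> nth false b' i) ->
  exists j : 'I_n, ~~ nth false b j && nth false b' j.
Proof.
move=> bb' b_le_b'; apply/existsP; apply: contraNT bb' => /existsPn no_flip.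
apply/eqP/(@eq_from_nth _ false) => [|i]; first by rewrite size_b size_b'.
rewrite size_b => lt_in; have := no_flip (Ordinal lt_in).
move: (b_le_b' (Ordinal lt_in)) => /=.
by case: (nth false b i); case: (nth false b' i) => //= /(_ isT).
Qed.

Lemma prod_bit_ratio_flip (j : 'I_n) h : ~~ nth false b j -> nth false b' j -> 0 < h ->
  (\prod_(i < n) bit_ratio (a i) (nth false b i) (nth false b' i) h) / h =
  (a j + h)^-1 * \prod_(i < n | i != j) bit_ratio (a i) (nth false b i) (nth false b' i) h.
Proof.
move=> bj b'j h_gt0; rewrite (bigD1 j) //= {1}/bit_ratio (negbTE bj) b'j.
have ajh_gt0 : 0 < a j + h by rewrite addr_gt0 // a_gt0.
by field; rewrite !gt_eqF.
Qed.

Lemma flip_rate_cvg : b != b' ->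
  (\prod_(i < n) bit_ratio (a i) (nth false b i) (nth false b' i) h) / h
    @[h --> 0^'+] --> flip_rate.
Proof.
move=> bb'.
have [i /andP[bi b'i] | no_drop] :=
  pickP (fun i : 'I_n => nth false b i && ~~ nth false b' i).
  rewrite (flip_rate_eq0 i bi b'i); apply: cvg_near_cst; near=> h.
  by rewrite (bigD1 i) //= /bit_ratio bi (negbTE b'i) !mul0r.
have b_le_b' (i : 'I_n) : nth false b i -> nth false b' i.
  by move=> bi; apply: contraT => b'i; have := no_drop i; rewrite /= bi b'i.
have [j /andP[bj b'j]] := exists_flip bb' b_le_b'.
rewrite (flip_rate_at j bj b'j).
have -> : (if b' == set_nth false b j true then (a j)^-1 else 0) = (a j)^-1 *
    \prod_(i < n | i != j) bit_ratio (a i) (nth false b i) (nth false b' i) 0.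
  by rewrite prod_bit_ratio0 //; case: eqP; rewrite ?mulr1 ?mulr0.
have others_cvg : \prod_(i < n | i != j)
    bit_ratio (a i) (nth false b i) (nth false b' i) h @[h --> 0^'+] -->
    \prod_(i < n | i != j) bit_ratio (a i) (nth false b i) (nth false b' i) 0.
  apply: cvg_big => [|i _]; first exact: mul_continuous.
  by apply: bit_ratio_cvg; case: (nth false b i) (a_gt0 i) => //= /(_ isT).
apply: cvg_trans (cvgM (inv_shift_cvg (lt0r_neq0 (a_gt0 j bj))) others_cvg).
apply: near_eq_cvg; near=> h; rewrite /= (prod_bit_ratio_flip j) //.
Unshelve. all: by end_near.
Qed.

End FlipRate.

Lemma measurable_bool_seq {d} {T : measurableType d} (f : nat -> T -> bool)
    (I : seq nat) (Q : pred (seq bool)) :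
  (forall i, measurable [set w | f i w]) -> measurable [set w | Q [seq f i w | i <- I]].
Proof.
move=> mf; elim: I Q => [|i I IHI] Q /=.
  case: (Q [::]).
    by rewrite [X in measurable X](_ : _ = setT) //; apply/seteqP.
  by rewrite [X in measurable X](_ : _ = set0) //; apply/seteqP; split.
rewrite [X in measurable X](_ : _ =
    [set w | f i w] `&` [set w | Q (true :: [seq f i w | i <- I])] `|`
    ~` [set w | f i w] `&` [set w | Q (false :: [seq f i w | i <- I])]).
  apply: measurableU; apply: measurableI => //; last exact: (IHI (fun s => Q (false :: s))).
    exact: (IHI (fun s => Q (true :: s))).
  exact: measurableC.
apply/seteqP; split => w /=; case: (f i w) => /=.
- by left.
- by right.
- by case=> -[].
- by case=> -[].
Qed.

Section CompositionProcess.
Context {d : measure_display} {T : measurableType d} {R : realType}.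
Variables (P : probability T R) (Theta : nat -> T -> R) (n : nat).
Hypothesis mTheta : forall i, measurable_fun setT (Theta i).
Hypothesis indep : mutually_independent P Theta.
Hypothesis Theta0_le0 : Pr P [set w | Theta 0 w <= 0] = 1.
Hypothesis n_gt0 : (0 < n)%N.

Definition observed (L : seq (R * seq nat)) : set T :=
  [set w | all (fun p => Cproc Theta n p.1 w == p.2) L].

Definition encodable (x : seq nat) : bool :=
  (size (encode x) == n) && (decode (encode x) == x).

Definition bit_obs (i : nat) (L : seq (R * seq nat)) : seq (R * bool) :=
  [seq (p.1, nth false (encode p.2) i) | p <- L].

Lemma observed_cat L1 L2 : observed (L1 ++ L2) = observed L1 `&` observed L2.
Proof.
apply/seteqP; split => w; rewrite /observed /= all_cat; first by case/andP.
by case=> -> ->.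
Qed.

Lemma observed1 t x : observed [:: (t, x)] = [set w | Cproc Theta n t w = x].
Proof. by apply/seteqP; split => w; rewrite /observed /= andbT => /eqP. Qed.

Lemma measurable_observed L : measurable (observed L).
Proof.
elim: L => [|p L IHL]; first by rewrite [observed _](_ : _ = setT) //; apply/seteqP.
rewrite -cat1s observed_cat; apply: measurableI => //.
rewrite [observed _](_ : _ =
  [set w | (fun s => decode s == p.2) [seq Theta i w <= p.1 | i <- iota 0 n]]).
  apply: (measurable_bool_seq (fun i w => Theta i w <= p.1) (iota 0 n)
    (fun s => decode s == p.2)) => i.
  exact: measurable_preimage_le.
by apply/seteqP; split => w; rewrite /observed /= andbT.
Qed.

Lemma Cproc_eq t w x : 0 <= t -> Theta 0 w <= 0 ->
  (Cproc Theta n t w == x) =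
  encodable x && all (fun i => (Theta i w <= t) == nth false (encode x) i) (iota 0 n).
Proof.
move=> t_ge0 Theta0w.
have [s bits_E] : exists s, [seq Theta i w <= t | i <- iota 0 n] = true :: s.
  case: n n_gt0 => // m _; exists [seq Theta i w <= t | i <- iota 1 m].
  by rewrite /= (le_trans Theta0w).
by rewrite /Cproc bits_E decode_true_eq -bits_E map_iota_eq /encodable andbAC.
Qed.

Lemma observed_bits L w : all (fun p => 0 <= p.1) L -> Theta 0 w <= 0 ->
  all (fun p => Cproc Theta n p.1 w == p.2) L =
  all (fun p => encodable p.2) L &&
  all (fun i => all (fun q => (Theta i w <= q.1) == q.2) (bit_obs i L)) (iota 0 n).
Proof.
move=> /allP L_ge0 Theta0w.
rewrite (eq_in_all (fun p pL => Cproc_eq p.1 w p.2 (L_ge0 p pL) Theta0w)) all_predI.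
congr andb; rewrite -[LHS]/(allrel _ L (iota 0 n)) allrelC.
by apply: eq_all => i; rewrite all_map.
Qed.

(* On the almost sure event Theta 0 <= 0 every observed binary word starts with 1,
   so decoding it is faithful. *)
Lemma observedI_Theta0_le0 L : all (fun p => 0 <= p.1) L ->
  observed L `&` [set w | Theta 0 w <= 0] =
  (if all (fun p => encodable p.2) L
   then \bigcap_(i in [set i | i \in iota 0 n]) (Theta i @^-1` threshold_set (bit_obs i L))
   else set0) `&` [set w | Theta 0 w <= 0].
Proof.
move=> L_ge0; apply/seteqP; split=> w [Lw Theta0w]; split=> //; move: Lw.
  rewrite /observed /= observed_bits //; case: all => //= /allP bits i.
  exact: bits.
case: ifP => // encL bits; rewrite /observed /= observed_bits // encL /=.
by apply/allP => i; apply: bits.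
Qed.

Lemma Pr_observed L : all (fun p => 0 <= p.1) L ->
  Pr P (observed L) = (all (fun p => encodable p.2) L)%:R *
    \prod_(i < n) Pr P (Theta i @^-1` threshold_set (bit_obs i L)).
Proof.
move=> L_ge0; have mG : measurable [set w | Theta 0 w <= 0].
  exact: measurable_preimage_le.
rewrite -(PrI_almost_sure P _ _ (measurable_observed L) mG Theta0_le0) observedI_Theta0_le0 //.
case: all => /=; last by rewrite set0I Pr0 mul0r.
rewrite PrI_almost_sure ?mul1r //; last first.
  apply: fin_bigcap_measurable; first exact: finite_seq.
  by move=> i _; apply: measurable_preimage_threshold.
rewrite indep; [|exact: iota_uniq | by move=> i _; exact: measurable_threshold_set].
by rewrite [iota 0 n](_ : _ = index_iota 0 n) ?big_mkord // /index_iota subn0.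
Qed.

Lemma Pr_observed_markov past s t x y :
  all (fun p => (0 <= p.1) && (p.1 <= s)) past -> 0 <= s -> s <= t ->
  Pr P (observed (past ++ [:: (s, x); (t, y)])) * Pr P (observed [:: (s, x)]) =
  Pr P (observed (past ++ [:: (s, x)])) * Pr P (observed [:: (s, x); (t, y)]).
Proof.
move=> past_s s_ge0 le_st.
have past_ge0 : all (fun p => 0 <= p.1) past by apply: sub_all past_s => p /andP[].
have t_ge0 := le_trans s_ge0 le_st.
rewrite !Pr_observed ?all_cat /= ?past_ge0 ?s_ge0 ?t_ge0 // mulrACA [RHS]mulrACA.
congr (_ * _).
  by case: all; case: (encodable x); case: (encodable y); rewrite ?mulr0 ?mul0r.
rewrite -!big_split /=; apply: eq_bigr => i _; rewrite /bit_obs !map_cat /=.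
apply: (threshold_markov (fun B => Pr P (Theta i @^-1` B))) => //.
  by rewrite preimage_set0 Pr0.
by rewrite all_map; apply: sub_all past_s => p /andP[].
Qed.

Lemma Cproc_markov : is_markov P (Cproc Theta n).
Proof.
move=> past s t x y past_s s_ge0 le_st A Ex Ey PAEx_gt0.
have Ex_obs : Ex = observed [:: (s, x)] by rewrite observed1.
have AEx_obs : A `&` Ex = observed (past ++ [:: (s, x)]) by rewrite observed_cat Ex_obs.
have AExEy_obs : A `&` Ex `&` Ey = observed (past ++ [:: (s, x); (t, y)]).
  by rewrite -cat1s observed_cat -cat1s -catA observed_cat observed1 observed1 setIA.
have ExEy_obs : Ex `&` Ey = observed [:: (s, x); (t, y)].
  by rewrite -cat1s observed_cat !observed1.
have PEx_gt0 : 0 < Pr P Ex.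
  apply: lt_le_trans PAEx_gt0 _; apply: Pr_le; last exact: subIsetr.
    by rewrite AEx_obs; exact: measurable_observed.
  by rewrite Ex_obs; exact: measurable_observed.
apply/eqP; rewrite eqr_div ?(lt0r_neq0 PEx_gt0) ?(lt0r_neq0 PAEx_gt0) //; apply/eqP.
by rewrite AExEy_obs AEx_obs ExEy_obs Ex_obs Pr_observed_markov // mulrC.
Qed.

Hypothesis cdf : forall i theta, 0 <= theta ->
  Pr P [set w | Theta i w <= theta] = cdfTheta i theta.

Lemma encodable_composition x : is_composition n x -> encodable x.
Proof.
by move=> x_comp; rewrite /encodable (size_encode x_comp) (composition_encodeK x_comp) !eqxx.
Qed.

Lemma Pr_Cproc_eq theta c : 0 <= theta -> is_composition n c ->
  Pr P [set w | Cproc Theta n theta w = c] =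
  \prod_(i < n) Pr P (Theta i @^-1` threshold_set [:: (theta, nth false (encode c) i)]).
Proof.
move=> theta_ge0 c_comp.
by rewrite -observed1 Pr_observed /= ?theta_ge0 // encodable_composition // mul1r.
Qed.

Lemma Pr_Cproc_transition theta h c c' : 0 <= theta -> 0 < h ->
  is_composition n c -> is_composition n c' ->
  Pr P [set w | Cproc Theta n theta w = c] != 0 ->
  Pr P ([set w | Cproc Theta n theta w = c] `&` [set w | Cproc Theta n (theta + h) w = c'])
    / Pr P [set w | Cproc Theta n theta w = c] =
  \prod_(i < n) bit_ratio (theta + i%:R) (nth false (encode c) i) (nth false (encode c') i) h.
Proof.
move=> theta_ge0 h_gt0 c_comp c'_comp.
rewrite Pr_Cproc_eq // => /prodf_neq0 single_neq0.
rewrite -!observed1 -observed_cat Pr_observed /=; last first.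
  by rewrite theta_ge0 addr_ge0 // ltW.
rewrite !encodable_composition // mul1r -prodf_div; apply: eq_bigr => i _.
apply: (Pr_threshold_ratio _ _ (mTheta i) _ _ _ _ _ (cdf i) theta_ge0 h_gt0).
exact: single_neq0.
Qed.

Lemma Cproc_rates : has_rates P n (Cproc Theta n) (rate n).
Proof.
move=> theta c c' theta_ge0 c_comp c'_comp cc' /lt0r_neq0 PEx_neq0.
pose a i := theta + i%:R.
have rateE : rate n theta c c' = \sum_(i < n)
    (if ~~ nth false (encode c) i && (encode c' == set_nth false (encode c) i true)
     then (a i)^-1 else 0).
  by apply: eq_bigr => i _; rewrite (set_nth_default false) ?(size_encode c_comp) // eqbF_neg.
have a_gt0 (i : 'I_n) : ~~ nth false (encode c) i -> 0 < a i.
  move=> ci; rewrite ltr_wpDl // ltr0n.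
  apply: (cdfTheta_index_gt0 _ _ (mTheta i) _ _ (cdf i) theta_ge0); rewrite -(negbTE ci).
  by move: PEx_neq0; rewrite Pr_Cproc_eq // => /prodf_neq0; apply.
have enc_neq : encode c != encode c'.
  apply: contraNneq cc' => enc_eq.
  by rewrite -(composition_encodeK c_comp) enc_eq (composition_encodeK c'_comp).
rewrite rateE; apply: cvg_trans
  (flip_rate_cvg (size_encode c_comp) (size_encode c'_comp) a_gt0 enc_neq).
apply: near_eq_cvg; near=> h; rewrite /= Pr_Cproc_transition //.
Unshelve. all: by end_near.
Qed.

End CompositionProcess.

Theorem corollary3 (d : measure_display) (T : measurableType d) (R : realType)
  (P : probability T R) (Theta : nat -> T -> R) (n : nat) :
  (forall i, measurable_fun setT (Theta i)) ->
  mutually_independent P Theta ->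
  (forall (i : nat) (theta : R), 0 <= theta ->
      Pr P [set w | Theta i w <= theta] = cdfTheta i theta) ->
  (1 <= n)%N ->
  is_markov P (Cproc Theta n) /\
  has_rates P n (Cproc Theta n) (rate n).
Proof.
move=> mTheta indep cdf n_gt0.
have Theta0_le0 : Pr P [set w | Theta 0 w <= 0] = 1 by rewrite cdf // cdfTheta0.
by split; [apply: Cproc_markov | apply: Cproc_rates].
Qed.
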